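(* Fix $\varepsilon>0$. Then there exists $\gamma=\gamma(\varepsilon)>0$ such that for every $n$ there exist two sets $X_1,X_2\subseteq\mathbb{R}^2$ with $|X_1|,|X_2|\le n$ such that (i) the diameter of $X_2$ is at most $\varepsilon$, and (ii) the number of pairs $(x_1,x_2)\in X_1\times X_2$ with $\|x_1-x_2\|=1$ is at least $\gamma\, u_2(n,n)$.
   Context: $u_2(m,n)$ denotes the maximum, over sets $A$ of $m$ points and $B$ of $n$ points in $\mathbb{R}^2$, of the number of pairs $(a,b)\in A\times B$ with $\|a-b\|=1$ (equivalently, the maximum number of incidences between $m$ points and $n$ unit circles in the plane). *)

(* concrete reals R, points of R^2 as R * R, finite point
   sets as duplicate-free lists. *)
From Stdlib Require Import Reals Lra List ClassicalEpsilon.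
Import ListNotations.
Open Scope R_scope.

Definition point := (R * R)%type.

Definition dist2 (p q : point) : R :=
  sqrt ((fst p - fst q) ^ 2 + (snd p - snd q) ^ 2).

Definition unit_pairs (A B : list point) : nat :=
  length (filter (fun ab => if Req_EM_T (dist2 (fst ab) (snd ab)) 1
                            then true else false) (list_prod A B)).

Definition achieved (m n k : nat) : Prop :=
  exists A B : list point, NoDup A /\ NoDup B /\ length A = m /\
    length B = n /\ unit_pairs A B = k.

Fixpoint max_achieved (m n b : nat) : nat :=
  match b with
  | O => O
  | S b' => if excluded_middle_informative (achieved m n (S b'))
            then S b' else max_achieved m n b'
  end.

(* u_2(m,n): the maximum number of unit-distance pairs between m points and
   n points in the plane (always <= m*n). *)
Definition u2 (m n : nat) : nat := max_achieved m n (m * n).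

Definition diam_le (X : list point) (eps : R) : Prop :=
  forall p q, In p X -> In q X -> dist2 p q <= eps.

(* Take sets A, B of n points realising u2(n, n) and tile the plane by squares
   of side s = eps/4.  The two endpoints of a unit pair lie in squares whose
   offset belongs to a fixed finite box of K offsets, so some offset d carries
   at least a 1/K fraction of the unit pairs.  Translate every point of B by the
   vector of its square back to the base square, and every point of A by the
   vector of its square plus d: the pairs with offset d are moved by a common
   vector and stay at unit distance, while the image of B has diameter O(s).
   To keep the images duplicate-free each square is also jittered by
   tau * (atan i, atan j); only finitely many tau produce a collision. *)

From Stdlib Require Import Reals List.
From Stdlib Require Import Lra Lia ZArith ClassicalEpsilon.
Import ListNotations.
Open Scope R_scope.

Lemma NoDup_list_prod {X Y} (A : list X) (B : list Y) :
  NoDup A -> NoDup B -> NoDup (list_prod A B).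
Proof.
  intros HA HB; induction HA as [|a A Ha HA IH]; simpl; [constructor|].
  apply NoDup_app; auto.
  - apply NoDup_map_NoDup_ForallPairs; auto.
    intros x y _ _ E; now injection E.
  - intros [x y] h1 h2.
    apply in_map_iff in h1 as [z [e _]]; injection e as -> ->.
    apply in_prod_iff in h2; tauto.
Qed.

Lemma length_filter_le_inj {T U} (L : list T) (L' : list U)
    (P : T -> bool) (Q : U -> bool) (h : T -> U) :
  NoDup L ->
  (forall x y, In x L -> In y L -> P x = true -> P y = true -> h x = h y -> x = y) ->
  (forall x, In x L -> P x = true -> In (h x) L' /\ Q (h x) = true) ->
  (length (filter P L) <= length (filter Q L'))%nat.
Proof.
  intros HN Hinj Hmap.
  rewrite <- (length_map h).
  apply NoDup_incl_length.
  - apply NoDup_map_NoDup_ForallPairs; [|now apply NoDup_filter].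
    intros x y hx hy; apply filter_In in hx, hy; apply Hinj; tauto.
  - intros y hy; apply in_map_iff in hy as [x [<- hx]].
    apply filter_In in hx; apply filter_In, Hmap; tauto.
Qed.

Lemma list_sum_map_le {K} (D : list K) (F G : K -> nat) :
  (forall d, In d D -> (F d <= G d)%nat) ->
  (list_sum (map F D) <= list_sum (map G D))%nat.
Proof.
  induction D as [|e D IH]; simpl; intros H; [lia|].
  specialize (H e (or_introl eq_refl)) as He.
  assert (list_sum (map F D) <= list_sum (map G D))%nat by (apply IH; auto).
  lia.
Qed.

Lemma le_list_sum_map {K} (D : list K) (F : K -> nat) d :
  In d D -> (F d <= list_sum (map F D))%nat.
Proof.
  induction D as [|e D IH]; simpl; [tauto|].
  intros [<-|h]; [lia|]. specialize (IH h); lia.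
Qed.

Lemma list_sum_map_le_mul {K} (D : list K) (F : K -> nat) k :
  (forall d, In d D -> (F d <= k)%nat) ->
  (list_sum (map F D) <= length D * k)%nat.
Proof.
  induction D as [|e D IH]; simpl; intros H; [lia|].
  specialize (H e (or_introl eq_refl)) as He.
  assert (list_sum (map F D) <= length D * k)%nat by (apply IH; auto).
  lia.
Qed.

Lemma length_filter_le_list_sum {X K} (L : list X) (D : list K)
    (Q : X -> bool) (Pd : K -> X -> bool) :
  (forall x, Q x = true -> exists d, In d D /\ Pd d x = true) ->
  (length (filter Q L) <= list_sum (map (fun d => length (filter (Pd d) L)) D))%nat.
Proof.
  intros Hcover; induction L as [|x L IH]; simpl; [lia|].
  assert (Hsplit : list_sum (map (fun d => length (if Pd d x
                                 then x :: filter (Pd d) L else filter (Pd d) L)) D)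
      = (list_sum (map (fun d => if Pd d x then 1 else 0) D)
         + list_sum (map (fun d => length (filter (Pd d) L)) D))%nat).
  { clear Hcover IH; induction D as [|e D IHD]; simpl; [lia|].
    rewrite IHD; destruct (Pd e x); simpl; lia. }
  rewrite Hsplit; destruct (Q x) eqn:Hq; simpl; [|lia].
  destruct (Hcover x Hq) as [d [hd hp]].
  pose proof (le_list_sum_map D (fun d => if Pd d x then 1%nat else 0%nat) d hd) as G.
  simpl in G; rewrite hp in G; lia.
Qed.

Lemma exists_argmax {K} (D : list K) (F : K -> nat) :
  D <> [] -> exists d, In d D /\ forall e, In e D -> (F e <= F d)%nat.
Proof.
  induction D as [|x D IH]; intros Hne; [congruence|].
  destruct D as [|y D].
  - exists x; split; [now left|]; intros e [<-|[]]; lia.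
  - destruct IH as [d [hd hmax]]; [congruence|].
    destruct (Nat.le_gt_cases (F x) (F d)).
    + exists d; split; [now right|]; intros e [<-|he]; auto.
    + exists x; split; [now left|]; intros e [<-|he]; [lia|].
      specialize (hmax e he); lia.
Qed.

Lemma exists_le_length_mul {K} (D : list K) (F : K -> nat) (I : nat) :
  D <> [] -> (I <= list_sum (map F D))%nat ->
  exists d, In d D /\ (I <= length D * F d)%nat.
Proof.
  intros Hne HI; destruct (exists_argmax D F Hne) as [d [hd hmax]].
  exists d; split; auto.
  pose proof (list_sum_map_le_mul D F (F d) hmax); lia.
Qed.

Lemma exists_pos_not_In (L : list R) r : 0 < r -> exists t, 0 < t <= r /\ ~ In t L.
Proof.
  revert r; induction L as [|x L IH]; intros r Hr.
  - exists r; simpl; split; [lra|tauto].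
  - destruct (Rlt_dec 0 x) as [hx|hx].
    + destruct (IH (Rmin r x / 2)) as [t [[t_pos t_le] t_notin]].
      { pose proof (Rmin_glb_lt r x 0 Hr hx); lra. }
      pose proof (Rmin_l r x); pose proof (Rmin_r r x).
      exists t; split; [lra|]; intros [->|h]; [lra|tauto].
    + destruct (IH r Hr) as [t [[t_pos t_le] t_notin]].
      exists t; split; [lra|]; intros [->|h]; [lra|tauto].
Qed.

Lemma u2_zero_or_achieved m n : u2 m n = 0%nat \/ achieved m n (u2 m n).
Proof.
  unfold u2; induction (m * n)%nat as [|b IH]; simpl; [now left|].
  destruct (excluded_middle_informative (achieved m n (S b))); [now right|exact IH].
Qed.

Lemma Rabs_fst_sub_le_dist2 p q : Rabs (fst p - fst q) <= dist2 p q.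
Proof.
  unfold dist2; rewrite <- sqrt_Rsqr_abs; apply sqrt_le_1_alt.
  pose proof (pow2_ge_0 (snd p - snd q)); unfold Rsqr; lra.
Qed.

Lemma Rabs_snd_sub_le_dist2 p q : Rabs (snd p - snd q) <= dist2 p q.
Proof.
  unfold dist2; rewrite <- sqrt_Rsqr_abs; apply sqrt_le_1_alt.
  pose proof (pow2_ge_0 (fst p - fst q)); unfold Rsqr; lra.
Qed.

Lemma dist2_le_of_coords p q r :
  Rabs (fst p - fst q) <= r -> Rabs (snd p - snd q) <= r -> dist2 p q <= 2 * r.
Proof.
  intros h1 h2; pose proof (Rabs_pos (fst p - fst q)).
  unfold dist2; rewrite <- (sqrt_pow2 (2 * r)) by lra; apply sqrt_le_1_alt.
  pose proof (pow_maj_Rabs _ _ 2 h1); pose proof (pow_maj_Rabs _ _ 2 h2).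
  pose proof (pow2_ge_0 r); replace ((2 * r) ^ 2) with (4 * r ^ 2) by ring; lra.
Qed.

Definition cell (s : R) (p : point) : Z * Z :=
  (Int_part (fst p / s), Int_part (snd p / s)).

Definition zadd (c d : Z * Z) : Z * Z := ((fst c + fst d)%Z, (snd c + snd d)%Z).

Definition cell_offset (s : R) (a b : point) : Z * Z :=
  ((fst (cell s b) - fst (cell s a))%Z, (snd (cell s b) - snd (cell s a))%Z).

Lemma zadd_cell_offset s a b : zadd (cell s a) (cell_offset s a b) = cell s b.
Proof.
  unfold zadd, cell_offset; destruct (cell s a), (cell s b); simpl; f_equal; ring.
Qed.

Definition zrange (M : nat) : list Z :=
  map (fun k => (Z.of_nat k - Z.of_nat M)%Z) (seq 0 (2 * M + 1)).

Definition box (M : nat) : list (Z * Z) := list_prod (zrange M) (zrange M).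

Lemma In_zrange M z : (- Z.of_nat M <= z <= Z.of_nat M)%Z -> In z (zrange M).
Proof.
  intros H; apply in_map_iff; exists (Z.to_nat (z + Z.of_nat M)).
  split; [lia|]; apply in_seq; lia.
Qed.

Lemma box_nonempty M : box M <> [].
Proof.
  assert (H0 : In 0%Z (zrange M)) by (apply In_zrange; lia).
  intro E; assert (H : In (0%Z, 0%Z) (box M)) by (apply in_prod; exact H0).
  rewrite E in H; exact H.
Qed.

Lemma residue_bounds s x : 0 < s -> 0 <= x - s * IZR (Int_part (x / s)) < s.
Proof.
  intros hs; destruct (base_Int_part (x / s)) as [h1 h2].
  assert (x = s * (x / s)) by (field; lra).
  split; nra.
Qed.

Lemma Int_part_div_sub_bound s M u w :
  0 < s -> 1 / s + 1 <= INR M -> Rabs (u - w) <= 1 ->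
  (- Z.of_nat M <= Int_part (u / s) - Int_part (w / s) <= Z.of_nat M)%Z.
Proof.
  intros hs hM huw.
  pose proof (residue_bounds s u hs); pose proof (residue_bounds s w hs).
  assert (Hs : s * (1 / s) = 1) by (field; lra).
  rewrite INR_IZR_INZ in hM.
  assert (-1 <= u - w <= 1) as [h1 h2].
  { unfold Rabs in huw; destruct (Rcase_abs (u - w)); lra. }
  split; apply le_IZR; rewrite ?minus_IZR, ?opp_IZR; apply (Rmult_le_reg_l s); nra.
Qed.

Lemma cell_offset_In_box s M a b :
  0 < s -> 1 / s + 1 <= INR M -> dist2 a b <= 1 -> In (cell_offset s a b) (box M).
Proof.
  intros hs hM hab; apply in_prod; apply In_zrange, Int_part_div_sub_bound; auto;
    rewrite <- Rabs_Ropp, Ropp_minus_distr; eapply Rle_trans; eauto.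
  - apply Rabs_fst_sub_le_dist2.
  - apply Rabs_snd_sub_le_dist2.
Qed.

Definition shift (s tau : R) (c : Z * Z) (p : point) : point :=
  (fst p - s * IZR (fst c) + tau * atan (IZR (fst c)),
   snd p - s * IZR (snd c) + tau * atan (IZR (snd c))).

Lemma dist2_shift s tau c p q : dist2 (shift s tau c p) (shift s tau c q) = dist2 p q.
Proof. unfold dist2, shift; simpl; f_equal; ring. Qed.

Lemma shift_inj s tau c p q : shift s tau c p = shift s tau c q -> p = q.
Proof.
  unfold shift; intros E; injection E as E1 E2.
  destruct p, q; simpl in *; f_equal; lra.
Qed.

Lemma atan_IZR_inj i j : atan (IZR i) = atan (IZR j) -> i = j.
Proof.
  intros E; destruct (Z.lt_total i j) as [h|[h|h]]; auto;
    apply IZR_lt, atan_increasing in h; lra.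
Qed.

Definition collision_tau (s : R) (p q : point) (c c' : Z * Z) : R :=
  if Z.eq_dec (fst c) (fst c')
  then (snd q - snd p + s * (IZR (snd c) - IZR (snd c')))
       / (atan (IZR (snd c)) - atan (IZR (snd c')))
  else (fst q - fst p + s * (IZR (fst c) - IZR (fst c')))
       / (atan (IZR (fst c)) - atan (IZR (fst c'))).

Lemma shift_collision s tau c c' p q :
  shift s tau c p = shift s tau c' q -> c <> c' -> tau = collision_tau s p q c c'.
Proof.
  unfold shift, collision_tau; intros E Hne; injection E as E1 E2.
  destruct (Z.eq_dec (fst c) (fst c')) as [e|e].
  - assert (e2 : snd c <> snd c') by (destruct c, c'; simpl in *; congruence).
    assert (atan (IZR (snd c)) <> atan (IZR (snd c'))) by (intro; now apply e2, atan_IZR_inj).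
    field_simplify_eq; lra.
  - assert (atan (IZR (fst c)) <> atan (IZR (fst c'))) by (intro; now apply e, atan_IZR_inj).
    field_simplify_eq; lra.
Qed.

Definition shift_injective (s tau : R) (P : list point) (C : list (Z * Z)) : Prop :=
  forall p q c c', In p P -> In q P -> In c C -> In c' C ->
    shift s tau c p = shift s tau c' q -> p = q /\ c = c'.

Lemma exists_shift_injective s P C r :
  0 < r -> exists tau, 0 < tau <= r /\ shift_injective s tau P C.
Proof.
  intros Hr.
  set (bad := map (fun x => collision_tau s (fst (fst x)) (snd (fst x)) (fst (snd x)) (snd (snd x)))
                  (list_prod (list_prod P P) (list_prod C C))).
  destruct (exists_pos_not_In bad r Hr) as [tau [Htau Hgood]].
  exists tau; split; auto.
  intros p q c c' hp hq hc hc' E.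
  destruct (excluded_middle_informative (c = c')) as [<-|ne].
  - split; [eapply shift_inj; eauto|reflexivity].
  - exfalso; apply Hgood, in_map_iff.
    exists ((p, q), (c, c')); split; [symmetry; exact (shift_collision _ _ _ _ _ _ E ne)|].
    apply in_prod; apply in_prod; auto.
Qed.

Lemma shift_cell_coord_close s tau x y :
  0 < s -> 0 <= tau ->
  Rabs ((x - s * IZR (Int_part (x / s)) + tau * atan (IZR (Int_part (x / s))))
        - (y - s * IZR (Int_part (y / s)) + tau * atan (IZR (Int_part (y / s)))))
  <= s + 4 * tau.
Proof.
  intros hs htau.
  pose proof (residue_bounds s x hs); pose proof (residue_bounds s y hs).
  pose proof (atan_bound (IZR (Int_part (x / s)))).
  pose proof (atan_bound (IZR (Int_part (y / s)))).
  pose proof PI_4.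
  apply Rabs_le; split; nra.
Qed.

Lemma dist2_shift_cell_le s tau p q :
  0 < s -> 0 <= tau ->
  dist2 (shift s tau (cell s p) p) (shift s tau (cell s q) q) <= 2 * (s + 4 * tau).
Proof.
  intros hs htau; apply dist2_le_of_coords; apply shift_cell_coord_close; auto.
Qed.

Definition is_unit (ab : point * point) : bool :=
  if Req_EM_T (dist2 (fst ab) (snd ab)) 1 then true else false.

Definition zpair_eq_dec (c d : Z * Z) : {c = d} + {c <> d}.
Proof. decide equality; apply Z.eq_dec. Defined.

Section Folding.

Variables (s tau : R) (M : nat) (A B : list point).
Hypotheses (s_pos : 0 < s) (tau_nonneg : 0 <= tau) (M_large : 1 / s + 1 <= INR M).
Hypotheses (A_nodup : NoDup A) (B_nodup : NoDup B).

Definition shift_labels : list (Z * Z) :=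
  map (cell s) B ++ flat_map (fun d => map (fun a => zadd (cell s a) d) A) (box M).

Hypothesis shift_generic : shift_injective s tau (A ++ B) shift_labels.

Definition folded_A (d : Z * Z) : list point :=
  map (fun a => shift s tau (zadd (cell s a) d) a) A.

Definition folded_B : list point := map (fun b => shift s tau (cell s b) b) B.

Definition unit_at_offset (d : Z * Z) (ab : point * point) : bool :=
  if zpair_eq_dec (cell_offset s (fst ab) (snd ab)) d then is_unit ab else false.

Lemma shift_A_inj d a a' :
  In d (box M) -> In a A -> In a' A ->
  shift s tau (zadd (cell s a) d) a = shift s tau (zadd (cell s a') d) a' -> a = a'.
Proof.
  intros hd ha ha' E.
  assert (label : forall x, In x A -> In (zadd (cell s x) d) shift_labels).
  { intros x hx; apply in_or_app; right; apply in_flat_map; exists d; split; auto.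
    apply (in_map (fun y => zadd (cell s y) d)); exact hx. }
  apply (shift_generic _ _ _ _ (in_or_app _ _ _ (or_introl ha))
           (in_or_app _ _ _ (or_introl ha')) (label a ha) (label a' ha') E).
Qed.

Lemma shift_B_inj b b' :
  In b B -> In b' B -> shift s tau (cell s b) b = shift s tau (cell s b') b' -> b = b'.
Proof.
  intros hb hb' E.
  assert (label : forall x, In x B -> In (cell s x) shift_labels).
  { intros x hx; apply in_or_app; left; now apply in_map. }
  apply (shift_generic _ _ _ _ (in_or_app _ _ _ (or_intror hb))
           (in_or_app _ _ _ (or_intror hb')) (label b hb) (label b' hb') E).
Qed.

Lemma NoDup_folded_A d : In d (box M) -> NoDup (folded_A d).
Proof.
  intros hd; apply NoDup_map_NoDup_ForallPairs; auto.
  intros a a' ha ha'; now apply shift_A_inj.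
Qed.

Lemma NoDup_folded_B : NoDup folded_B.
Proof. apply NoDup_map_NoDup_ForallPairs; auto; intros b b'; now apply shift_B_inj. Qed.

Lemma diam_folded_B : diam_le folded_B (2 * (s + 4 * tau)).
Proof.
  intros p q hp hq; apply in_map_iff in hp as [b [<- _]], hq as [b' [<- _]].
  now apply dist2_shift_cell_le.
Qed.

Lemma unit_at_offset_le d :
  In d (box M) ->
  (length (filter (unit_at_offset d) (list_prod A B)) <= unit_pairs (folded_A d) folded_B)%nat.
Proof.
  intros hd; apply (length_filter_le_inj _ _ _ _
    (fun ab => (shift s tau (zadd (cell s (fst ab)) d) (fst ab),
                shift s tau (cell s (snd ab)) (snd ab)))).
  - now apply NoDup_list_prod.
  - intros [a b] [a' b'] hab ha'b' _ _ E; apply in_prod_iff in hab, ha'b'.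
    apply pair_equal_spec in E as [Ea Eb]; simpl in *.
    f_equal; [apply (shift_A_inj d) | apply shift_B_inj]; tauto.
  - intros [a b] hab hu; apply in_prod_iff in hab; simpl.
    revert hu; unfold unit_at_offset; cbn [fst snd].
    destruct (zpair_eq_dec (cell_offset s a b) d) as [<-|]; [intros hu|discriminate].
    split; [apply in_prod; apply in_map_iff; [exists a | exists b]; tauto|].
    now rewrite zadd_cell_offset, dist2_shift.
Qed.

Lemma unit_pairs_le_sum_folded :
  (unit_pairs A B <= list_sum (map (fun d => unit_pairs (folded_A d) folded_B) (box M)))%nat.
Proof.
  eapply Nat.le_trans; [|apply list_sum_map_le, unit_at_offset_le].
  apply length_filter_le_list_sum; intros [a b] hu.
  exists (cell_offset s a b); split.
  - apply cell_offset_In_box; auto; simpl in hu.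
    destruct (Req_EM_T (dist2 a b) 1); [lra|discriminate].
  - unfold unit_at_offset; cbn [fst snd].
    destruct (zpair_eq_dec (cell_offset s a b) (cell_offset s a b)); [exact hu|tauto].
Qed.

Lemma exists_dense_offset :
  exists d, In d (box M) /\
    (unit_pairs A B <= length (box M) * unit_pairs (folded_A d) folded_B)%nat.
Proof. apply exists_le_length_mul; [apply box_nonempty|apply unit_pairs_le_sum_folded]. Qed.

End Folding.

Theorem proposition3p2 :
  forall eps : R, 0 < eps ->
  exists gamma : R, 0 < gamma /\
  forall n : nat,
  exists X1 X2 : list point,
    NoDup X1 /\ NoDup X2 /\
    (length X1 <= n)%nat /\ (length X2 <= n)%nat /\
    diam_le X2 eps /\
    INR (unit_pairs X1 X2) >= gamma * INR (u2 n n).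
Proof.
  intros eps Heps.
  set (s := eps / 4); assert (s_pos : 0 < s) by (unfold s; lra).
  destruct (INR_archimed 1 (1 / s + 1)) as [M HM]; [lra|].
  assert (M_large : 1 / s + 1 <= INR M) by lra.
  set (K := length (box M)).
  assert (K_pos : 0 < INR K).
  { pose proof (box_nonempty M); apply lt_0_INR; unfold K; destruct (box M); [congruence|simpl; lia]. }
  exists (/ INR K); split; [now apply Rinv_0_lt_compat|].
  intros n; destruct (u2_zero_or_achieved n n) as [H0|[A [B [HA [HB [LA [LB HI]]]]]]].
  { exists [], []; rewrite H0; simpl.
    repeat split; try apply NoDup_nil; try lia; [intros p q []|lra]. }
  destruct (exists_shift_injective s (A ++ B) (shift_labels s M A B) (eps / 16))
    as [tau [[tau_pos tau_le] tau_generic]]; [lra|].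
  destruct (exists_dense_offset s tau M A B s_pos M_large HA HB tau_generic)
    as [d [hd dense]].
  exists (folded_A s tau A d), (folded_B s tau B); repeat split.
  - now apply (NoDup_folded_A s tau M A B).
  - now apply (NoDup_folded_B s tau M A B).
  - unfold folded_A; rewrite length_map; lia.
  - unfold folded_B; rewrite length_map; lia.
  - intros p q hp hq; apply Rle_trans with (2 * (s + 4 * tau)); [|unfold s; lra].
    now apply (diam_folded_B s tau B s_pos (Rlt_le _ _ tau_pos)).
  - rewrite HI in dense; apply le_INR in dense; rewrite mult_INR in dense; fold K in dense.
    apply Rle_ge, (Rmult_le_reg_l (INR K)); auto.
    rewrite <- Rmult_assoc, Rinv_r, Rmult_1_l; lra.
Qed.
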